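(* For $n>2$, the lattice generated by the vertices of $P(D_n)$ has index one in the lattice $\mathrm{aff}(P(D_n))\cap\mathbb{Z}^{n\times n}$; that is, every integer matrix $X$ that is a real linear combination of the differences $g-e$ ($g\in D_n$) is an integer linear combination of these differences.
   Context: Each $g\in S_n$ is identified with its $n\times n$ permutation matrix (entry $(i,j)$ is $1$ iff $g(i)=j$); $e$ is the identity; $P(G)=\mathrm{conv}\{g:g\in G\}$. $D_n\le S_n$ is generated by $r=(1\ 2\ \cdots\ n)$ and $f=(1\ n)(2\ n-1)\cdots(\lfloor\frac{n+1}{2}\rfloor\ \lceil\frac{n+1}{2}\rceil)$. *)

From HB Require Import structures.
From mathcomp Require Import all_boot all_order all_algebra all_fingroup.
From mathcomp Require Import reals.
Set Implicit Arguments. Unset Strict Implicit. Unset Printing Implicit Defensive.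
Import Order.TTheory GRing.Theory Num.Theory.

(* Indices are 0-based: the paper's point k (1 <= k <= n) is the ordinal k-1. *)

Definition rotD (n : nat) : {perm 'I_n} := perm (@ordS_inj n).

Definition flipD (n : nat) : {perm 'I_n} := perm (@rev_ord_inj n).

Definition dihedral (n : nat) : {set {perm 'I_n}} :=
  <<[set rotD n; flipD n]>>%g.

Definition permmx (R : pzRingType) (n : nat) (g : {perm 'I_n}) : 'M[R]_n :=
  \matrix_(i, j) (if g i == j then 1 else 0)%R.

From Pilot Require Import Defs.
From HB Require Import structures.
From mathcomp Require Import all_boot all_order all_algebra all_fingroup.
From mathcomp Require Import reals.
From mathcomp Require Import ring.
Set Implicit Arguments.
Unset Strict Implicit.
Unset Printing Implicit Defensive.

Import Order.TTheory GRing.Theory Num.Theory.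
Local Open Scope ring_scope.

(* Identify the points with Z/n, so that D_n consists of the rotations x |-> x + d
   and the reflections x |-> s - x.  The (i, j) entry of
   sum_d a_d (P_rot_d - I) + sum_s b_s (P_refl_s - I) is
   a(j - i) + b(i + j) - [i = j] (sum a + sum b).
   Off the diagonal, comparing the entries (i, j) and (i + 1, j + 1) shows that each
   b(k + 2) - b(k) is an integer when the matrix is integral.  Adding to a a function
   h with h(j - i) = h(i + j) and subtracting it from b leaves the matrix unchanged;
   with h constant, or for n even h = t + u (-1)^x, we may assume b(0) = 0, and also
   b(1) = 0 when n is even (for n odd, 1 = n + 1 is reached from 0 in steps of 2).
   Hence b is integral, and so is a(d) = X(0, d) - b(d) for d <> 0, while a(0)
   multiplies P_e - I = 0. *)

Section Dihedral.
Variable m : nat.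
Local Notation n := m.+3.
Local Notation Zn := 'I_n.

Lemma Zn_two_neq0 : 2 != 0 :> Zn.
Proof. by apply/eqP => /(congr1 val) /=; rewrite !modn_small. Qed.

Lemma Zn_natr_n : n%:R = 0 :> Zn.
Proof. by apply: val_inj; have := @val_Zp_nat n isT n; rewrite modnn. Qed.

Lemma Zn_sum_of_distinct (k : Zn) : exists i j : Zn, i != j /\ i + j = k.
Proof.
have [-> | k0] := eqVneq k 0; last by exists 0, k; rewrite add0r eq_sym.
exists (-1), 1; rewrite addNr; split=> //.
by apply: contraNneq Zn_two_neq0 => /eqP; rewrite eq_sym -subr_eq0 opprK.
Qed.

Lemma rot_inj (d : Zn) : injective (fun x : Zn => x + d).
Proof. exact: addIr. Qed.

Lemma refl_inj (s : Zn) : injective (fun x : Zn => s - x).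
Proof. by move=> x y /addrI/oppr_inj. Qed.

Definition rot (d : Zn) : {perm Zn} := perm (@rot_inj d).
Definition refl (s : Zn) : {perm Zn} := perm (@refl_inj s).

Lemma rotE d x : rot d x = x + d. Proof. by rewrite permE. Qed.
Lemma reflE s x : refl s x = s - x. Proof. by rewrite permE. Qed.

Lemma rot0 : rot 0 = 1%g.
Proof. by apply/permP => x; rewrite rotE perm1 addr0. Qed.

Lemma rotM d e : (rot d * rot e = rot (d + e))%g.
Proof. by apply/permP => x; rewrite permM !rotE addrA. Qed.

Lemma rot_reflM d t : (rot d * refl t = refl (t - d))%g.
Proof. by apply/permP => x; rewrite permM !rotE !reflE opprD addrA addrAC. Qed.

Lemma refl_rotM t d : (refl t * rot d = refl (t + d))%g.
Proof. by apply/permP => x; rewrite permM !rotE !reflE addrAC. Qed.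

Lemma reflM t u : (refl t * refl u = rot (u - t))%g.
Proof. by apply/permP => x; rewrite permM !rotE !reflE opprB addrCA. Qed.

Lemma rotX k : ((rot 1%R) ^+ k = rot k%:R)%g.
Proof.
elim: k => [|k IHk]; first by rewrite expg0 rot0.
by rewrite expgSr IHk rotM natr1.
Qed.

Lemma rotD_rot : Defs.rotD n = rot 1.
Proof.
apply/permP => x; rewrite rotE /Defs.rotD permE; apply: val_inj => /=.
by rewrite (@modn_small 1) // addn1.
Qed.

Lemma flipD_refl : Defs.flipD n = refl (-1).
Proof.
apply/permP => x; rewrite reflE /Defs.flipD permE.
have /eqP : rev_ord x + x + 1 = 0.
  apply: val_inj => /=; rewrite modnDml (@modn_small 1) // -addnA addn1 subnK //.
  by rewrite modnn.
by rewrite -addrA addr_eq0 => /eqP ->; rewrite opprD addrC.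
Qed.

Definition rotations : {set {perm Zn}} := [set rot d | d : Zn].
Definition reflections : {set {perm Zn}} := [set refl s | s : Zn].

Lemma rot_inj_perm : injective rot.
Proof. by move=> d e /permP/(_ 0); rewrite !rotE !add0r. Qed.

Lemma refl_inj_perm : injective refl.
Proof. by move=> s t /permP/(_ 0); rewrite !reflE !subr0. Qed.

Lemma refl_notin_rotations s : refl s \notin rotations.
Proof.
apply/imsetP => -[d _ /permP E]; move: (E 0) (E 1); rewrite !rotE !reflE add0r subr0.
move=> <- /eqP; rewrite eq_sym -subr_eq0.
by have -> : 1 + s - (s - 1) = 2 by ring; rewrite (negbTE Zn_two_neq0).
Qed.

Lemma dihedral_rot_refl : dihedral n = rotations :|: reflections.
Proof.
have DH_group : group_set (rotations :|: reflections).
  apply/group_setP; split; first by rewrite -rot0 inE imset_f.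
  move=> x y; rewrite !inE => /orP[] /imsetP[a _ ->] /orP[] /imsetP[b _ ->].
  - by rewrite rotM imset_f.
  - by rewrite rot_reflM imset_f ?orbT.
  - by rewrite refl_rotM imset_f ?orbT.
  - by rewrite reflM imset_f.
apply/eqP; rewrite eqEsubset; apply/andP; split.
  rewrite -(gen_set_id DH_group); apply: genS; apply/subsetP => x.
  by rewrite !inE => /orP[] /eqP ->; rewrite ?rotD_rot ?flipD_refl imset_f ?orbT.
have rot_in d : rot d \in dihedral n.
  rewrite -(natr_Zp d) -rotX groupX // -rotD_rot.
  by apply: mem_gen; rewrite !inE eqxx.
apply/subsetP => x; rewrite !inE => /orP[] /imsetP[a _ ->]; first exact: rot_in.
have -> : refl a = (refl (-1) * rot (a + 1))%g by rewrite refl_rotM addrC addrK.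
rewrite groupM //; last exact: rot_in.
by rewrite -flipD_refl; apply: mem_gen; rewrite !inE eqxx orbT.
Qed.

Lemma sum_dihedral (V : nmodType) (F : {perm Zn} -> V) :
  \sum_(g in dihedral n) F g = \sum_d F (rot d) + \sum_s F (refl s).
Proof.
rewrite dihedral_rot_refl (eq_bigl [predU rotations & reflections]) => [|g]; last first.
  by rewrite !inE.
rewrite bigU; last first.
  rewrite disjoint_sym disjoints_subset; apply/subsetP => _ /imsetP[s _ ->].
  by rewrite inE refl_notin_rotations.
by rewrite !big_imset //; apply: in2W; [apply: refl_inj_perm | apply: rot_inj_perm].
Qed.

Definition dihcomb {S : pzRingType} (a b : Zn -> S) : 'M[S]_n :=
  \sum_d a d *: (permmx S (rot d) - permmx S 1)
  + \sum_s b s *: (permmx S (refl s) - permmx S 1).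

Lemma sum_dihedral_dihcomb (S : pzRingType) (c : {perm Zn} -> S) :
  \sum_(g in dihedral n) c g *: (permmx S g - permmx S 1) = dihcomb (c \o rot) (c \o refl).
Proof. exact: sum_dihedral. Qed.

Lemma dihcomb_entry (S : pzRingType) (a b : Zn -> S) i j :
  dihcomb a b i j = a (j - i) + b (i + j) - (i == j)%:R * (\sum_d a d + \sum_s b s).
Proof.
have pick (F : Zn -> S) (P : pred Zn) k : P k -> (forall x, P x -> x = k) ->
    \sum_x F x * (P x)%:R = F k.
  move=> Pk uniqP; rewrite (bigD1 k) //= Pk mulr1 big1 ?addr0 // => x xk.
  have /negbTE -> : ~~ P x by apply: contra xk => /uniqP ->.
  by rewrite mulr0.
have if_natr (c : bool) : (if c then 1 else 0) = c%:R :> S by case: c.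
rewrite !mxE !summxE.
under eq_bigr do rewrite !mxE !if_natr rotE perm1 mulrBr.
under [X in _ + X]eq_bigr do rewrite !mxE !if_natr reflE perm1 mulrBr.
rewrite !sumrB (pick a (fun d => i + d == j) (j - i)); last 2 first.
- by rewrite addrC subrK.
- by move=> d /eqP <-; rewrite [i + d]addrC addrK.
rewrite (pick b (fun s => s - i == j) (i + j)); last 2 first.
- by rewrite addrC addKr.
- by move=> s /eqP <-; rewrite addrC subrK.
by rewrite -!mulr_suml !mulr_natr mulr_natl mulrnDl opprD addrACA.
Qed.

Lemma map_dihcomb (S T : pzRingType) (f : {rmorphism S -> T}) (a b : Zn -> S) :
  map_mx f (dihcomb a b) = dihcomb (f \o a) (f \o b).
Proof.
apply/matrixP => i j.
by rewrite mxE !dihcomb_entry rmorphB rmorphD rmorphM rmorph_nat rmorphD !rmorph_sum.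
Qed.

Lemma eq_dihcomb (S : pzRingType) (a a' b b' : Zn -> S) :
  (forall d, d != 0 -> a d = a' d) -> b =1 b' -> dihcomb a b = dihcomb a' b'.
Proof.
move=> eq_a eq_b; congr (_ + _); apply: eq_bigr => d _; last by rewrite eq_b.
by have [->|/eq_a -> //] := eqVneq d 0; rewrite rot0 subrr !scaler0.
Qed.

Lemma dihcomb_shift (S : comNzRingType) (a b h : Zn -> S) :
  (forall i j, h (j - i) = h (i + j)) ->
  dihcomb (fun d => a d + h d) (fun s => b s - h s) = dihcomb a b.
Proof.
move=> hE; apply/matrixP => i j.
by rewrite !dihcomb_entry big_split sumrB /= hE; ring.
Qed.

Lemma Zn_odd_subr_addr (i j : Zn) : ~~ odd n -> odd (j - i)%R = odd (i + j)%R.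
Proof.
move=> /negbTE n_even.
have -> : nat_of_ord (j - i) = ((j + (n - i) %% n) %% n)%N by [].
have -> : nat_of_ord (i + j) = ((i + j) %% n)%N by [].
by rewrite !odd_mod // !oddD odd_mod // oddB ?(ltnW (ltn_ord i)) // n_even addbC.
Qed.

Lemma dihcomb_normalize (F : numFieldType) (a b : Zn -> F) :
  exists a' b' : Zn -> F,
    dihcomb a b = dihcomb a' b' /\ b' 0 = 0 /\ (~~ odd n -> b' 1 = 0).
Proof.
have [n_odd | n_even] := boolP (odd n).
  exists (fun d => a d + b 0), (fun s => b s - b 0).
  by rewrite dihcomb_shift // subrr; split => //; rewrite n_odd.
pose t := (b 0 + b 1) / 2; pose u := (b 0 - b 1) / 2.
exists (fun d => a d + (t + u * (-1) ^+ d)), (fun s => b s - (t + u * (-1) ^+ s)).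
rewrite dihcomb_shift => [|i j]; last by rewrite -signr_odd Zn_odd_subr_addr // signr_odd.
by split=> //; split=> [|_] /=; rewrite /t /u ?expr0 ?expr1; field.
Qed.

Section Integrality.
Variable R : archiNumDomainType.
Implicit Type b : Zn -> R.

Lemma int_step_by_even b :
  (forall k, b (k + 2) - b k \is a Num.int) ->
  forall k y, b (k + (y.*2)%:R) - b k \is a Num.int.
Proof.
move=> step k; elim=> [|y IHy]; first by rewrite addr0 subrr rpred0.
have -> : ((y.+1).*2)%:R = (y.*2)%:R + 2 :> Zn by rewrite doubleS -[y.*2.+2]addn2 natrD.
rewrite addrA; set c := k + _.
have -> : b (c + 2) - b k = (b (c + 2) - b c) + (b c - b k) by ring.
by rewrite rpredD.
Qed.

Lemma int_of_step_by_two b :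
  (forall k, b (k + 2) - b k \is a Num.int) -> b 0 = 0 -> (~~ odd n -> b 1 = 0) ->
  forall s, b s \is a Num.int.
Proof.
move=> step b0 b1.
have even_int y : b (y.*2)%:R \is a Num.int.
  by have := int_step_by_even step 0 y; rewrite add0r b0 subr0.
have b1_int : b 1 \is a Num.int.
  have [n_odd | /b1 -> //] := boolP (odd n).
  suff -> : 1 = ((n.+1)./2.*2)%:R :> Zn by apply: even_int.
  have -> : (n.+1)./2.*2 = n.+1.
    by rewrite -[RHS]odd_double_half oddS n_odd.
  by rewrite -natr1 Zn_natr_n add0r.
move=> s; rewrite -(natr_Zp s) -(odd_double_half s) natrD.
have := int_step_by_even step (odd s)%:R s./2.
by case: (odd s) => /=; rewrite ?b0 ?subr0 // rpredBr.
Qed.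

Lemma dihcomb_int_coefs (X : 'M[int]_n) (a b : Zn -> R) :
  map_mx intr X = dihcomb a b -> b 0 = 0 -> (~~ odd n -> b 1 = 0) ->
  (forall d, d != 0 -> a d \is a Num.int) /\ (forall s, b s \is a Num.int).
Proof.
move=> /matrixP XE b0 b1.
have X_int i j : i != j -> a (j - i) + b (i + j) \is a Num.int.
  move=> /negbTE ij; have := XE i j.
  by rewrite mxE dihcomb_entry ij mul0r subr0 => <-; apply: intr_int.
have b_int : forall s, b s \is a Num.int.
  apply: int_of_step_by_two => // k.
  have [i [j [ij <-]]] := Zn_sum_of_distinct k.
  have ij1 : i + 1 != j + 1 by rewrite (inj_eq (addIr 1)).
  have := rpredB (X_int _ _ ij1) (X_int _ _ ij).
  have -> : j + 1 - (i + 1) = j - i by ring.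
  have -> : i + 1 + (j + 1) = i + j + 2 by ring.
  by rewrite opprD addrACA subrr add0r.
split=> // d d0; have := X_int 0 d; rewrite eq_sym d0 subr0 add0r => /(_ isT).
by rewrite rpredDr.
Qed.

End Integrality.

Lemma dihcomb_as_dihedral_sum (S : pzRingType) (a b : Zn -> S) :
  exists k : {perm Zn} -> S,
    \sum_(g in dihedral n) k g *: (permmx S g - permmx S 1) = dihcomb a b.
Proof.
exists (fun g => if g \in rotations then a (g 0) else b (g 0)).
rewrite sum_dihedral_dihcomb; congr (_ + _); apply: eq_bigr => d _ /=.
  by rewrite imset_f // rotE add0r.
by rewrite (negbTE (refl_notin_rotations d)) reflE subr0.
Qed.

End Dihedral.

Theorem proposition4 (R : realType) (n : nat) (hn : (2 < n)%N) (X : 'M[int]_n) :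
  (exists c : {perm 'I_n} -> R,
     map_mx (fun z : int => z%:~R) X =
     \sum_(g in dihedral n) c g *: (permmx R g - permmx R 1%g)) ->
  exists k : {perm 'I_n} -> int,
     X = \sum_(g in dihedral n) k g *: (permmx int g - permmx int 1%g).
Proof.
case: n hn X => [|[|[|m]]] // _ X [c]; rewrite sum_dihedral_dihcomb.
have [a [b [-> [b0 b1]]]] := dihcomb_normalize (c \o @rot m) (c \o @refl m).
move=> XE; have [a_int b_int] := dihcomb_int_coefs XE b0 b1.
have [k kE] := dihcomb_as_dihedral_sum (Num.floor \o a) (Num.floor \o b).
have floorE : map_mx intr (dihcomb (Num.floor \o a) (Num.floor \o b)) = dihcomb a b.
  by rewrite map_dihcomb; apply: eq_dihcomb => [d d0|s] /=; rewrite floorK ?a_int ?b_int.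
exists k; rewrite kE; apply/matrixP => i j; apply: (@intr_inj R).
by move/matrixP: XE => /(_ i j); move/matrixP: floorE => /(_ i j); rewrite !mxE => -> ->.
Qed.
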